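(* Consider a $k$-label broadcasting tree with parameter $\theta\in(0,1)$ (see context), and for a vertex $v$ let $X_t^{(i)}(\ell_{T_{\leq t}(v)})=\mathbb{P}(\ell(v)=i\mid \ell_{T_{\leq t}(v)})$ under the uniform prior on $\ell(v)\in[k]$. Then for any $i\neq j\in[k]$ and $t\geq 2$, $$\log\frac{X_t^{(i)}(\ell_{T_{\leq t}(v)})}{X_t^{(j)}(\ell_{T_{\leq t}(v)})}=\log\frac{X_1^{(i)}(\ell_{T_{1}(v)})}{X_1^{(j)}(\ell_{T_{1}(v)})}+\sum_{u\in\mathcal{C}^{\rm u}(v)}\log\frac{1+\frac{k\theta}{1-\theta}X_{t-1}^{(i)}(\ell_{T_{\leq t-1}(u)})}{1+\frac{k\theta}{1-\theta}X_{t-1}^{(j)}(\ell_{T_{\leq t-1}(u)})}.$$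
   Context: $k$-label broadcasting tree: labels lie in $[k]=\{1,\dots,k\}$; conditionally on the label of a vertex $v$, each child $u$ independently has $\ell(u)=\ell(v)$ with probability $\theta+\frac{1-\theta}{k}$ and $\ell(u)=l$ for each $l\in[k]\setminus\{\ell(v)\}$ with probability $\frac{1-\theta}{k}$. Each vertex's children are split into labeled children $\mathcal{C}^{\rm l}(v)$ (label revealed) and unlabeled children $\mathcal{C}^{\rm u}(v)$. $\ell_{T_{\leq t}(v)}$ denotes the revealed labels in the subtree of depth $\leq t$ rooted at $v$, and $\ell_{T_1(v)}$ the revealed labels among the children of $v$. *)

From HB Require Import structures.
From mathcomp Require Import all_boot all_order all_algebra.
From mathcomp Require Import all_classical all_reals.
From mathcomp Require Import exp.
Set Implicit Arguments. Unset Strict Implicit. Unset Printing Implicit Defensive.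
Import Order.TTheory GRing.Theory Num.Theory.
Local Open Scope ring_scope.

(* Each child of a
   vertex is stored together with its observation: [Some l] if the child is a
   labeled child (its label l in [k] is revealed), [None] if it is an
   unlabeled child.  The root's own label is not observed. *)
Inductive btree (k : nat) : Type :=
  BNode of seq (option 'I_k * btree k).

Definition children k (T : btree k) : seq (option 'I_k * btree k) :=
  let: BNode cs := T in cs.

Section Broadcast.
Variables (R : realType) (k : nat) (theta : R).

Definition bcM (a b : 'I_k) : R :=
  (if a == b then theta else 0) + (1 - theta) / k%:R.

Definition obsw (o : option 'I_k) (l : 'I_k) : R :=
  if o is Some l' then (if l' == l then 1 else 0) else 1.

(* lik t i T = P(revealed labels of T_{<= t}(v) | l(v) = i): the joint law is
   the product of kernel weights over edges, and all hidden labels of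
   vertices at depth 1..t are summed out (written in nested form). *)
Fixpoint lik (t : nat) (i : 'I_k) (T : btree k) {struct t} : R :=
  match t with
  | 0 => 1
  | t'.+1 => \prod_(c <- children T)
               (\sum_(l < k) bcM i l * obsw c.1 l * lik t' l c.2)
  end.

(* X_t^{(i)} = P(l(v) = i | l_{T_{<=t}(v)}) under the uniform prior on [k] *)
Definition post (t : nat) (i : 'I_k) (T : btree k) : R :=
  (k%:R^-1 * lik t i T) / (\sum_(j < k) k%:R^-1 * lik t j T).

End Broadcast.

From HB Require Import structures.
From mathcomp Require Import all_boot all_order all_algebra.
From mathcomp Require Import all_classical all_reals.
From mathcomp Require Import exp.
From mathcomp Require Import ring.
Import Order.TTheory GRing.Theory Num.Theory.
Local Open Scope ring_scope.

(* The likelihood of T_{<= t+1}(v) is a product over the children u of v.  A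
   labeled child fixes its own label, so its factor B(i, l(u)) L_t(l(u); u)
   depends on i only through the kernel, exactly as at depth 1.  For an
   unlabeled child the factor is theta L_t(i; u) + (1 - theta)/k sum_l L_t(l; u),
   which is proportional, with a constant independent of i, to
   1 + k theta/(1 - theta) X_t^(i)(u).  The uniform prior cancels in X_t^(i)/X_t^(j),
   so taking logarithms gives the recursion. *)

Lemma ln_prod (R : realType) (I : Type) (s : seq I) (P : pred I) (F : I -> R) :
  (forall x, 0 < F x) ->
  ln (\prod_(x <- s | P x) F x) = \sum_(x <- s | P x) ln (F x).
Proof.
move=> F_gt0; elim: s => [|x s IHs]; first by rewrite !big_nil ln1.
rewrite !big_cons; case: (P x) => //.
by rewrite lnM ?IHs // posrE //; exact: prodr_gt0.
Qed.

Lemma psumr_ord_gt0 {R : numDomainType} {n : nat} (a : 'I_n) (F : 'I_n -> R) :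
  (forall l, 0 < F l) -> 0 < \sum_(l < n) F l.
Proof.
move=> F_gt0; rewrite (bigD1 a) //=; apply: ltr_pwDl => //.
by apply: sumr_ge0 => l _; exact/ltW.
Qed.

Section BroadcastLikelihood.
Variables (R : realType) (k : nat) (theta : R).
Hypotheses (theta_gt0 : 0 < theta) (theta_lt1 : theta < 1) (k_gt0 : (0 < k)%N).

Definition child_lik t (c : option 'I_k * btree k) (a : 'I_k) : R :=
  \sum_(l < k) bcM theta a l * obsw R c.1 l * lik theta t l c.2.

Local Notation K := (k%:R * theta / (1 - theta)).
Implicit Types (a b l : 'I_k) (T : btree k) (c : option 'I_k * btree k).

Lemma likS t a T : lik theta t.+1 a T = \prod_(c <- children T) child_lik t c a.
Proof. by []. Qed.

Lemma natrk_gt0 : 0 < (k%:R : R).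
Proof. by rewrite ltr0n. Qed.

Lemma bcM_gt0 (a b : 'I_k) : 0 < bcM theta a b.
Proof.
have q_gt0 : 0 < (1 - theta) / k%:R by rewrite divr_gt0 ?subr_gt0 ?natrk_gt0.
by rewrite /bcM; case: (a == b); [rewrite addr_gt0 | rewrite add0r].
Qed.

Lemma child_lik_labeled t c a l : c.1 = Some l ->
  child_lik t c a = bcM theta a l * lik theta t l c.2.
Proof.
move=> c_lab; rewrite /child_lik c_lab (bigD1 l) //= eqxx mulr1 big1 ?addr0 //.
by move=> l' l'l; rewrite /= eq_sym (negbTE l'l) mulr0 mul0r.
Qed.

Lemma child_lik_unlabeled t c a : c.1 = None ->
  child_lik t c a = theta * lik theta t a c.2 +
                    (1 - theta) / k%:R * \sum_(l < k) lik theta t l c.2.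
Proof.
move=> c_unlab; rewrite /child_lik c_unlab /=.
under eq_bigr do rewrite mulr1 /bcM mulrDl.
rewrite big_split /= -big_distrr /=; congr (_ + _).
rewrite (bigD1 a) //= eqxx big1 ?addr0 // => l la.
by rewrite eq_sym (negbTE la) mul0r.
Qed.

Lemma lik_gt0 t a T : 0 < lik theta t a T.
Proof.
elim: t a T => [|t IHt] a T; first exact: ltr01.
rewrite likS; apply: prodr_gt0 => c _.
case c_obs: c.1 => [l|].
  by rewrite (child_lik_labeled _ _ _ _ c_obs) mulr_gt0 ?bcM_gt0.
rewrite (child_lik_unlabeled _ _ _ c_obs); apply: ltr_pwDl; first exact: mulr_gt0.
apply: mulr_ge0; first by rewrite divr_ge0 ?subr_ge0 ?ltW ?natrk_gt0.
by apply/ltW/(psumr_ord_gt0 a).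
Qed.

Lemma sum_lik_gt0 t T : 0 < \sum_(l < k) lik theta t l T.
Proof. by apply: (psumr_ord_gt0 (Ordinal k_gt0)) => l; exact: lik_gt0. Qed.

Lemma postE t a T : post theta t a T = lik theta t a T / \sum_(l < k) lik theta t l T.
Proof.
have kV_neq0 : (k%:R : R)^-1 != 0 by rewrite invr_eq0 gt_eqF ?natrk_gt0.
by rewrite /post -big_distrr /= -mulf_div divff // mul1r.
Qed.

Lemma post_ratio t a b T :
  post theta t a T / post theta t b T = lik theta t a T / lik theta t b T.
Proof.
have S_gt0 := sum_lik_gt0 t T; have likb_gt0 := lik_gt0 t b T.
by rewrite !postE; field; rewrite !gt_eqF.
Qed.

Lemma child_lik_unlabeled_post t c a : c.1 = None ->
  child_lik t c a =
  (1 - theta) / k%:R * (\sum_(l < k) lik theta t l c.2) * (1 + K * post theta t a c.2).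
Proof.
move=> c_unlab; rewrite (child_lik_unlabeled _ _ _ c_unlab) postE.
have S_gt0 := sum_lik_gt0 t c.2; have k_pos := natrk_gt0.
have one_sub_theta_gt0 : 0 < 1 - theta by rewrite subr_gt0.
by field; rewrite !gt_eqF.
Qed.

Lemma child_lik_unlabeled_ratio t c a b : c.1 = None ->
  child_lik t c a / child_lik t c b =
  (1 + K * post theta t a c.2) / (1 + K * post theta t b c.2).
Proof.
move=> c_unlab; rewrite !(child_lik_unlabeled_post _ _ _ c_unlab) -mulf_div divff ?mul1r //.
by rewrite gt_eqF // mulr_gt0 ?divr_gt0 ?subr_gt0 ?natrk_gt0 ?sum_lik_gt0.
Qed.

Lemma child_lik0_unlabeled c a : c.1 = None -> child_lik 0 c a = 1.
Proof.
move=> c_unlab; rewrite (child_lik_unlabeled _ _ _ c_unlab) /= sumr_const card_ord.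
have k_pos := natrk_gt0.
by field; rewrite gt_eqF.
Qed.

Lemma child_lik_labeled_ratio t c a b : c.1 != None ->
  child_lik t c a / child_lik t c b = child_lik 0 c a / child_lik 0 c b.
Proof.
case c_obs: c.1 => [l|] // _; rewrite !(child_lik_labeled _ _ _ _ c_obs) /=.
by rewrite -mulf_div divff ?mulr1 ?mul1r ?divr1 // gt_eqF ?lik_gt0.
Qed.

Lemma lik_ratio_factor t a b T :
  lik theta t.+1 a T / lik theta t.+1 b T =
  lik theta 1 a T / lik theta 1 b T *
  \prod_(c <- children T | c.1 == None) (child_lik t c a / child_lik t c b).
Proof.
rewrite !likS -!prodf_div.
rewrite [LHS](bigID (fun c => c.1 == None)) [X in _ = X * _](bigID (fun c => c.1 == None)) /=.
rewrite [X in _ = X * _ * _]big1 ?mul1r; last first.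
  by move=> c /eqP c_unlab; rewrite !child_lik0_unlabeled ?divr1.
rewrite mulrC.
by congr (_ * _); apply: eq_bigr => c; exact: child_lik_labeled_ratio.
Qed.

Lemma child_lik_ratio_gt0 t c a b : 0 < child_lik t c a / child_lik t c b.
Proof.
have child_lik_gt0 a' : 0 < child_lik t c a'.
  by have := lik_gt0 t.+1 a' (BNode [:: c]); rewrite likS big_seq1.
by rewrite divr_gt0.
Qed.

End BroadcastLikelihood.

Arguments child_lik {R k} theta t c a.

Theorem lemma1 (R : realType) (k : nat) (theta : R)
  (htheta0 : 0 < theta) (htheta1 : theta < 1)
  (T : btree k) (i j : 'I_k) (hij : i != j) (t : nat) (ht : (2 <= t)%N) :
  ln (post theta t i T / post theta t j T) =
  ln (post theta 1 i T / post theta 1 j T) +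
  \sum_(c <- children T | c.1 == None)
     ln ((1 + k%:R * theta / (1 - theta) * post theta t.-1 i c.2) /
         (1 + k%:R * theta / (1 - theta) * post theta t.-1 j c.2)).
Proof.
have k_gt0 : (0 < k)%N := leq_ltn_trans (leq0n i) (ltn_ord i).
case: t ht => [|[|t]] // _ /=.
have ratio_gt0 c : 0 < child_lik theta t.+1 c i / child_lik theta t.+1 c j.
  by apply: child_lik_ratio_gt0.
rewrite !post_ratio // lik_ratio_factor // lnM ?posrE ?ln_prod //; last first.
- exact: prodr_gt0.
- by rewrite divr_gt0 ?lik_gt0.
congr (_ + _); apply: eq_bigr => c /eqP c_unlab.
by rewrite child_lik_unlabeled_ratio.
Qed.
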